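(* For any assessment $\mathcal{A}\subseteq\mathscr{Q}$, the following are equivalent: (1) $\mathcal{A}$ is consistent; (2) $\mathrm{Ex}(\mathcal{A})$ is a coherent set of desirable option sets; (3) $\emptyset\notin\mathrm{Ex}(\mathcal{A})$.
   Context: Let $\mathcal{X}$ be a nonempty set and let $\mathscr{V}$ be the real vector space of all functions $u:\mathcal{X}\to\mathbb{R}$ (options), with pointwise operations. For $u,v\in\mathscr{V}$, $u\le v$ iff $u(x)\le v(x)$ for all $x\in\mathcal{X}$, and $u<v$ iff $u\le v$ and $u\neq v$. Let $\mathscr{V}_{>0}=\{u\in\mathscr{V}:0<u\}$ and $\mathscr{V}^s_{>0}=\{\{u\}:u\in\mathscr{V}_{>0}\}$. Let $\mathscr{Q}$ be the set of all finite subsets of $\mathscr{V}$ (including $\emptyset$). For a positive integer $n$, $\mathbb{R}^{n,+}=\{\boldsymbol\lambda\in\mathbb{R}^n:\lambda_j\ge0\ \forall j,\ \sum_j\lambda_j>0\}$, and for $\boldsymbol\lambda\in\mathbb{R}^n$, $\mathbf u=(u_1,\dots,u_n)\in\mathscr{V}^n$, $\boldsymbol\lambda\mathbf u=\sum_{j=1}^n\lambda_ju_j$. A set of desirable option sets is any $K\subseteq\mathscr{Q}$. It is coherent if for all $A,B\in K$: (K0) $A\setminus\{0\}\in K$; (K1) $\{0\}\notin K$; (K2) $\mathscr{V}^s_{>0}\subseteq K$; (K3) $\{\boldsymbol\lambda(\mathbf u)\mathbf u:\mathbf u\in A\times B\}\in K$ for every map $\boldsymbol\lambda:A\times B\to\mathbb{R}^{2,+}$;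 (K4) $A\cup Q\in K$ for all $Q\in\mathscr{Q}$. $\bar{\mathbf K}$ denotes the set of coherent sets of desirable option sets. An assessment is any subset $\mathcal{A}\subseteq\mathscr{Q}$. Let $\bar{\mathbf K}(\mathcal A)=\{K\in\bar{\mathbf K}:\mathcal A\subseteq K\}$ and $\mathrm{Ex}(\mathcal A)=\bigcap\bar{\mathbf K}(\mathcal A)$, with the convention $\bigcap\emptyset=\mathscr{Q}$. $\mathcal A$ is called consistent if $\bar{\mathbf K}(\mathcal A)\neq\emptyset$. *)

From HB Require Import structures.
From mathcomp Require Import all_boot all_order all_algebra.
From mathcomp Require Import boolp classical_sets cardinality reals.
Set Implicit Arguments. Unset Strict Implicit. Unset Printing Implicit Defensive.
Import Order.TTheory GRing.Theory Num.Theory.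
Local Open Scope classical_set_scope.
Local Open Scope ring_scope.

Section DesirableOptionSets.
Variables (R : realType) (X : Type).

Definition option_t := X -> R.
Definition opt0 : option_t := fun _ => 0.

Definition ople (u v : option_t) : Prop := forall x, u x <= v x.
Definition oplt (u v : option_t) : Prop := ople u v /\ u <> v.

(* Q : all finite subsets of options (including the empty set) *)
Definition Qsets : set (set option_t) := [set A | finite_set A].

Definition R2pos (l : R * R) : Prop := 0 <= l.1 /\ 0 <= l.2 /\ 0 < l.1 + l.2.

Definition lincomb (l : R * R) (u : option_t * option_t) : option_t :=
  fun x => l.1 * u.1 x + l.2 * u.2 x.

Definition coherent (K : set (set option_t)) : Prop :=
  K `<=` Qsets /\
  (forall A, K A -> K (A `\ opt0)) /\
  ~ K [set opt0] /\
  (forall u, oplt opt0 u -> K [set u]) /\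
  (forall A B, K A -> K B ->
             forall lam : option_t * option_t -> R * R,
               (forall u, (A `*` B) u -> R2pos (lam u)) ->
               K [set lincomb (lam u) u | u in A `*` B]) /\
  (forall A Q, K A -> Qsets Q -> K (A `|` Q)).

Definition Kbar (As : set (set option_t)) : set (set (set option_t)) :=
  [set K | coherent K /\ As `<=` K].

(* Ex(A) = \bigcap \bar K(A), with \bigcap \emptyset = Q *)
Definition Ex (As : set (set option_t)) : set (set option_t) :=
  [set S | Qsets S /\ forall K, Kbar As K -> K S].

Definition consistent (As : set (set option_t)) : Prop := Kbar As !=set0.

End DesirableOptionSets.

From mathcomp Require Import all_boot all_order all_algebra.
From mathcomp Require Import boolp classical_sets cardinality reals.
Set Implicit Arguments. Unset Strict Implicit. Unset Printing Implicit Defensive.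
Local Open Scope classical_set_scope.

Section NaturalExtension.
Variables (R : realType) (X : Type).

Local Notation option_set := (set (option_t R X)).

Definition capQ (F : set (set option_set)) : set option_set :=
  [set S | Qsets S /\ forall K, F K -> K S].

Lemma Ex_capQ (As : set option_set) : Ex As = capQ (Kbar As).
Proof. by []. Qed.

Lemma coherent_capQ (F : set (set option_set)) :
  (forall K, F K -> coherent K) -> F !=set0 -> coherent (capQ F).
Proof.
move=> cohF [K0 FK0].
have [QK0 [_ [K1_0 [_ [K3_0 _]]]]] := cohF K0 FK0.
split; first by move=> S [].
split.
  move=> A [QA inA]; split; first exact: finite_setD.
  by move=> K FK; have [_ [K0_K _]] := cohF K FK; exact: K0_K (inA _ FK).
split; first by move=> [_ in0]; exact: K1_0 (in0 _ FK0).
split.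
  move=> u pos_u; split; first exact: finite_set1.
  by move=> K FK; have [_ [_ [_ [K2_K _]]]] := cohF K FK; apply: K2_K.
split.
  move=> A B [QA inA] [QB inB] lam lam_pos; split.
    by apply/QK0/K3_0 => //; [apply: inA | apply: inB].
  move=> K FK; have [_ [_ [_ [_ [K3_K _]]]]] := cohF K FK.
  by apply: K3_K => //; [apply: inA | apply: inB].
move=> A Q [QA inA] QQ; split; first by rewrite /Qsets /= finite_setU.
move=> K FK; have [_ [_ [_ [_ [_ K4_K]]]]] := cohF K FK.
exact: K4_K _ _ (inA _ FK) QQ.
Qed.

Lemma coherent_set0 (K : set option_set) : coherent K -> ~ K set0.
Proof.
move=> [_ [_ [K1 [_ [_ K4]]]]] K_set0; apply: K1.
by rewrite -[[set _]]set0U; apply: K4 => //; exact: finite_set1.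
Qed.

Lemma capQ_set0 (F : set (set option_set)) : F = set0 -> capQ F set0.
Proof. by move=> ->; split=> [|K []]; exact: finite_set0. Qed.

End NaturalExtension.

Theorem theorem3 (R : realType) (X : Type) (x0 : X)
    (As : set (set (option_t R X))) :
  As `<=` @Qsets R X ->
  (consistent As <-> coherent (Ex As)) /\
  (coherent (Ex As) <-> ~ Ex As set0).
Proof.
(* The equivalences hold for every assessment. *)
move=> _; rewrite Ex_capQ.
have cons_coh : consistent As -> coherent (capQ (Kbar As)).
  by apply: coherent_capQ => K [].
have coh_set0 : coherent (capQ (Kbar As)) -> ~ capQ (Kbar As) set0.
  exact: coherent_set0.
have set0_cons : ~ capQ (Kbar As) set0 -> consistent As.
  move=> no_set0; apply/set0P/eqP => Kbar0.
  exact/no_set0/capQ_set0.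
split; split.
- exact: cons_coh.
- by move=> /coh_set0 /set0_cons.
- exact: coh_set0.
- by move=> /set0_cons /cons_coh.
Qed.
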